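(* Let $(X,d)$ be a metric space and $\mu$ a non-atomic Borel measure on $X$. For every path $\gamma:[a,b]\to X$ in $\Gamma^\mu$ there is a unique map $\gamma_h:[0,h(\gamma)]\to X$ such that $\gamma=\gamma_h\circ\nu_\gamma$; moreover $\mathrm{Im}(\gamma)=\mathrm{Im}(\gamma_h)$ and $\nu_{\gamma_h}(t)=t$ for all $t\in[0,h(\gamma)]$ (so $\gamma_h=\gamma_h\circ\nu_{\gamma_h}$).
   Context: A path is a continuous map $\gamma:[a,b]\to X$; a subpath is a restriction to a subinterval, trivial if that interval is a point; $\mathrm{Im}(\gamma)=\gamma([a,b])$. $\mu$ non-atomic: $\mu(\{x\})=0$ for all $x\in X$. $\Gamma^\mu$ is the set of all non-trivial injective paths $\gamma$ in $X$ with $0<\mu(\mathrm{Im}(\tilde\gamma))<\infty$ for every non-trivial subpath $\tilde\gamma$ of $\gamma$. For $\gamma\in\Gamma^\mu$, $h(\gamma)=\mu(\mathrm{Im}(\gamma))$, and the $\mu$-arc length of $\gamma:[a,b]\to X$ is $\nu_\gamma:[a,b]\to\mathbb R$, $\nu_\gamma(x)=\mu(\gamma([a,x]))$. The map $\gamma_h$ is called the $\mu$-arc length parametrization of $\gamma$. *)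

From HB Require Import structures.
From mathcomp Require Import all_boot all_order all_algebra.
From mathcomp Require Import all_classical all_reals all_analysis.
Set Implicit Arguments. Unset Strict Implicit. Unset Printing Implicit Defensive.
Import Order.TTheory GRing.Theory Num.Theory.
Import numFieldNormedType.Exports.
Local Open Scope classical_set_scope.
Local Open Scope ring_scope.

Notation borelType X := (g_sigma_algebraType (@open X)).

Section defs.
Context {R : realType} {X : ptopologicalType}.
Variable mu : set (borelType X) -> \bar R.

Definition non_atomic := forall x : X, mu [set x] = 0%E.

(* gamma : [a,b] -> X (represented as a function R -> X, only its values on
   [a,b] matter) belongs to Gamma^mu: non-trivial (a < b), a path (continuous
   on [a,b]), injective on [a,b], and every non-trivial subpath
   gamma|[c,d] (a <= c < d <= b) has 0 < mu(Im) < +oo. *)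
Definition in_Gamma (a b : R) (gamma : R -> X) :=
  [/\ a < b,
      {within `[a, b], continuous gamma},
      {in `[a, b] &, injective gamma} &
      forall c d : R, a <= c -> c < d -> d <= b ->
        (0 < mu (gamma @` [set` `[c, d]]) < +oo)%E].

(* h(gamma) = mu(Im gamma) for gamma : [a,b] -> X (finite for gamma in Gamma^mu) *)
Definition hgt (a b : R) (gamma : R -> X) : R := fine (mu (gamma @` `[a, b])).

Definition nu (a : R) (gamma : R -> X) (x : R) : R := fine (mu (gamma @` [set` `[a, x]])).

End defs.

From HB Require Import structures.
From mathcomp Require Import all_boot all_order all_algebra.
From mathcomp Require Import all_classical all_reals all_analysis.
From mathcomp Require Import lra.
Import Order.TTheory GRing.Theory Num.Theory.
Import numFieldNormedType.Exports.
Local Open Scope classical_set_scope.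
Local Open Scope ring_scope.

(* The mu-arc length nu(x) = mu(gamma([a,x])) is additive along gamma: by
   injectivity gamma([a,x]) and gamma([x,y]) meet only in the mu-null point
   gamma(x).  As non-trivial subpaths have positive finite measure, nu is
   strictly increasing on [a,b] with nu(a) = 0.  It is also continuous: the
   images of shrinking intervals around x decrease to {gamma(x)}, so their
   measures tend to 0 by continuity of mu from above.  Hence nu maps [a,s]
   onto [0,nu(s)] bijectively, gamma_h := gamma o nu^-1 factors gamma, and
   gamma_h([0,nu(s)]) = gamma([a,s]) gives nu_{gamma_h} = id. *)

Lemma compact_borel (T : ptopologicalType) (A : set T) :
  hausdorff_space T -> compact A -> measurable (A : set (borelType T)).
Proof.
move=> hT cA; rewrite -(setCK A); apply: measurableC; apply: sub_gen_smallest.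
exact: closed_openC (compact_closed hT cA).
Qed.

Lemma eq_of_dist_le_inv (R : realType) (x y : R) :
  (forall k : nat, `|x - y| <= k.+1%:R^-1) -> x = y.
Proof.
move=> dxy; apply/eqP; rewrite -subr_eq0 -normr_eq0 eq_le normr_ge0 andbT.
rewrite leNgt; apply/negP => /ltr_add_invr[k]; rewrite add0r.
by apply/negP; rewrite -leNgt.
Qed.

Section mu_arc_length.
Context {R : realType} {X : pseudoPMetricType R} (HX : hausdorff_space X)
  {mu : {measure set (borelType X) -> \bar R}} (Hna : non_atomic mu).

Lemma measure_subset1 {A : set X} (x : X) :
  measurable (A : set (borelType X)) -> A `<=` [set x] -> mu A = 0%E.
Proof.
move=> mA Ax; apply: subset_measure0 mA _ Ax (Hna x).
by apply: compact_borel => //; exact: compact_set1.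
Qed.

Context {a b : R} {gamma : R -> X}.
Hypothesis gamma_in_Gamma : in_Gamma mu a b gamma.

Let ab : a < b. Proof. by case: gamma_in_Gamma. Qed.
Let gamma_cont : {within `[a, b], continuous gamma}.
Proof. by case: gamma_in_Gamma. Qed.
Let gamma_inj : {in `[a, b] &, injective gamma}.
Proof. by case: gamma_in_Gamma. Qed.
Let mu_subpath c d : a <= c -> c < d -> d <= b ->
  (0 < mu (gamma @` [set` `[c, d]]) < +oo)%E.
Proof. by case: gamma_in_Gamma => _ _ _; apply. Qed.

Let img c d := gamma @` [set` `[c, d]].
Let nuf := nu mu a gamma.

Lemma measurable_img {c d} : a <= c -> d <= b ->
  measurable (img c d : set (borelType X)).
Proof.
move=> ac db; apply: compact_borel => //.
apply: continuous_compact; last exact: segment_compact.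
apply: continuous_subspaceW gamma_cont; apply: subset_itv; by rewrite bnd_simp.
Qed.

Lemma img_fin_num {c d} : a <= c -> d <= b -> mu (img c d) \is a fin_num.
Proof.
move=> ac db; have [cd|dc] := ltP c d.
  have /andP[/ltW mu0 muoo] := mu_subpath _ _ ac cd db.
  by rewrite ge0_fin_numE.
rewrite (measure_subset1 (gamma c) (measurable_img ac db)) // => _ [t + <-].
rewrite /= in_itv /= => /andP[ct td].
by have -> : t = c by apply/eqP; rewrite eq_le ct (le_trans td dc).
Qed.

Lemma measure_img_split {c x y} : a <= c -> c <= x -> x <= y -> y <= b ->
  mu (img c y) = (mu (img c x) + mu (img x y))%E.
Proof.
move=> ac cx xy yb; have xb := le_trans xy yb; have ax := le_trans ac cx.
have -> : img c y = img c x `|` img x y.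
  rewrite /img -image_setU; congr image; apply/seteqP; split => t /=.
    by rewrite !in_itv /= => /andP[ct ty]; case: (leP t x) => tx; [left|right];
      rewrite ?ct ?ty ?(ltW tx).
  by rewrite !in_itv /= => -[] /andP[h1 h2]; apply/andP; split; lra.
rewrite measureUfinr ?ltey_eq ?img_fin_num //; try exact: measurable_img.
rewrite [mu (_ `&` _)](@measure_subset1 _ (gamma x)) ?sube0 //.
  by apply: measurableI; apply: measurable_img.
move=> _ [[s /= + <-] [t /= + ets]].
rewrite !in_itv /= => /andP[cs sx] /andP[xt ty].
have st : s = t.
  apply: gamma_inj => //; rewrite in_itv /=; apply/andP; split; lra.
by congr gamma; apply/eqP; rewrite eq_le sx st xt.
Qed.

Lemma nu_sub {x y} : a <= x -> x <= y -> y <= b ->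
  nuf y - nuf x = fine (mu (img x y)).
Proof.
move=> ax xy yb; have xb := le_trans xy yb.
rewrite /nuf /nu -/(img a y) -/(img a x) (measure_img_split (lexx a) ax xy yb).
by rewrite fineD ?img_fin_num // addrAC subrr add0r.
Qed.

Lemma nu_left : nuf a = 0.
Proof.
rewrite /nuf /nu -/(img a a).
rewrite (measure_subset1 (gamma a) (measurable_img (lexx a) (ltW ab))) //.
by move=> _ [t + <-]; rewrite /= itv_xx /= => /eqP ->.
Qed.

Lemma nu_ltr : {in `[a, b] &, {homo nuf : x y / x < y}}.
Proof.
move=> x y; rewrite !in_itv /= => /andP[ax _] /andP[_ yb] xy.
rewrite -subr_gt0 (nu_sub ax (ltW xy) yb).
exact: fine_gt0 (mu_subpath _ _ ax xy yb).
Qed.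

Lemma nu_ler : {in `[a, b] &, {mono nuf : x y / x <= y}}.
Proof. exact: le_mono_in nu_ltr. Qed.

Let lo (x : R) (n : nat) : R := Num.max a (x - n.+1%:R^-1).
Let hi (x : R) (n : nat) : R := Num.min b (x + n.+1%:R^-1).

Lemma in_shrink x n t : (t \in `[lo x n, hi x n]) =
  [&& a <= t, t <= b & `|t - x| <= n.+1%:R^-1].
Proof.
rewrite in_itv /= ge_max le_min ler_distl.
by case: (a <= t); case: (t <= b); rewrite /= ?andbT ?andbF.
Qed.

Lemma bigcap_img_shrink {x} : x \in `[a, b] ->
  \bigcap_n img (lo x n) (hi x n) = [set gamma x].
Proof.
move=> xab; apply/seteqP; split => [z capz|_ -> n _]; last first.
  exists x => //=; rewrite in_shrink subrr normr0 invr_ge0 ler0n andbT.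
  by rewrite in_itv /= in xab.
have [t0 + t0z] := capz 0%N I; rewrite /= in_shrink => /and3P[at0 t0b _].
subst z.
congr gamma; apply: eq_of_dist_le_inv => k.
have [t + ett0] := capz k I; rewrite /= in_shrink => /and3P[a_t tb].
by rewrite -(gamma_inj _ _ _ _ ett0) // in_itv /= ?a_t ?at0.
Qed.

Lemma measure_img_shrink {x} : x \in `[a, b] ->
  mu (img (lo x n) (hi x n)) @[n --> \oo] --> 0%E.
Proof.
move=> xab; have alo n : a <= lo x n by rewrite le_max lexx.
have hib n : hi x n <= b by rewrite ge_min lexx.
have m1 : measurable ([set gamma x] : set (borelType X)).
  by apply: compact_borel => //; exact: compact_set1.
rewrite -(Hna (gamma x)) -(bigcap_img_shrink xab).
apply: nonincreasing_cvg_mu => [|n||].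
- by rewrite ltey_eq img_fin_num.
- exact: measurable_img.
- by rewrite bigcap_img_shrink.
move=> n m nm; apply/subsetPset; apply: image_subset => t /=.
rewrite !in_shrink => /and3P[-> -> /le_trans]; apply.
by rewrite lef_pV2 ?posrE ?ltr0Sn // ler_nat ltnS.
Qed.

Lemma measure_img_near {x} (eps : R) : x \in `[a, b] -> 0 < eps ->
  exists2 del, 0 < del & forall c d, a <= c -> d <= b ->
    `|c - x| < del -> `|d - x| < del -> (mu (img c d) < eps%:E)%E.
Proof.
move=> xab eps0.
have [N _ /(_ N (leqnn N)) muN] : \forall n \near \oo,
    (mu (img (lo x n) (hi x n)) < eps%:E)%E.
  apply: (measure_img_shrink xab [set y | (y < eps%:E)%E]); apply/nbhs_EFin.
  by near=> y; rewrite /= lte_fin; near: y; exact: lt_nbhsl.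
exists N.+1%:R^-1 => [|c d ac db]; first by rewrite invr_gt0 ltr0Sn.
rewrite !ltr_distl => /andP[xc _] /andP[_ dx].
apply: le_lt_trans muN; apply: le_measure; rewrite ?inE.
- exact: measurable_img.
- by apply: measurable_img; rewrite ?le_max ?ge_min lexx.
apply: image_subset => t /=; rewrite in_shrink ler_distl !in_itv /=.
move=> /andP[ct td]; rewrite (le_trans ac ct) (le_trans td db) /=.
by apply/andP; split; apply: ltW;
  [apply: lt_le_trans ct|apply: le_lt_trans dx].
Unshelve. all: by end_near.
Qed.

Lemma nu_continuous : {within `[a, b], continuous nuf}.
Proof.
apply/subspace_continuousP => x xab; apply/cvgrPdist_lt => eps eps0.
have [del del0 img_small] := @measure_img_near x eps xab eps0.
have [ax xb] : a <= x /\ x <= b by move: xab; rewrite /= in_itv /= => /andP.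
have nu_small c d : a <= c -> c <= d -> d <= b -> `|c - x| < del ->
    `|d - x| < del -> nuf d - nuf c < eps.
  move=> ac cd db cx dx.
  by rewrite (nu_sub ac cd db) -lte_fin fineK ?img_fin_num //; exact: img_small.
rewrite near_withinE; exists del => //= t xt.
rewrite in_itv /= => /andP[at0 tb].
have xx : `|x - x| < del by rewrite subrr normr0.
rewrite /ball_ /= distrC in xt; change (`|nuf x - nuf t| < eps).
have [xt'|tx] := leP x t.
- rewrite distrC ger0_norm ?subr_ge0 ?nu_ler ?in_itv /= ?ax ?at0 //.
  exact: nu_small.
- rewrite ger0_norm ?subr_ge0 ?nu_ler ?in_itv /= ?ax ?at0 ?(ltW tx) //.
  exact: nu_small (ltW tx) _ _ _.
Qed.

Lemma nu_image {s} : s \in `[a, b] -> nuf @` `[a, s] = [set` `[0, nuf s]].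
Proof.
move=> sab; have /andP[as0 sb] : a <= s <= b by rewrite in_itv /= in sab.
have aab : a \in `[a, b] by rewrite in_itv /= lexx ltW.
have sub_ab t : t \in `[a, s] -> t \in `[a, b].
  by rewrite !in_itv /= => /andP[-> ts]; rewrite (le_trans ts sb).
apply/seteqP; split => [_ [t tas <-]|].
  have tab := sub_ab t tas.
  by move: tas; rewrite /= !in_itv /= -nu_left !nu_ler.
rewrite -nu_left; apply: segment_continuous_le_surjective => //.
  by rewrite nu_ler.
by apply: continuous_subspaceW nu_continuous => t /= /sub_ab.
Qed.

Let nu_inv := pinv `[a, b] nuf.

Lemma nu_invK : {in `[a, b], cancel nuf nu_inv}.
Proof.
move=> t tab; apply: pinvKV; last by rewrite inE.
by move=> x y; rewrite !inE; exact: (inc_inj_in nu_ler).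
Qed.

Lemma nu_inv_image {s} : s \in `[a, b] ->
  nu_inv @` `[0, nuf s] = [set` `[a, s]].
Proof.
move=> sab; rewrite -(nu_image sab) image_comp; apply: eq_image_id => t tas.
apply: nu_invK; move: sab tas; rewrite /= !in_itv /=.
move=> /andP[_ sb] /andP[-> ts].
exact: le_trans ts sb.
Qed.

Lemma nu_onto t : t \in `[0, nuf b] -> exists2 s, s \in `[a, b] & nuf s = t.
Proof.
have bab : b \in `[a, b] by rewrite in_itv /= lexx ltW.
move=> t0b; have : [set` `[0, nuf b]] t := t0b.
by rewrite -(nu_image bab) => -[s sab <-]; exists s.
Qed.

Let gamma_h := gamma \o nu_inv.

Lemma gamma_h_nu : {in [set` `[a, b]], forall t, gamma t = gamma_h (nuf t)}.
Proof. by move=> t; rewrite inE => tab; rewrite /gamma_h /= nu_invK. Qed.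

Lemma gamma_h_unique (g : R -> X) :
  {in [set` `[a, b]], forall t, gamma t = g (nuf t)} ->
  {in [set` `[0, nuf b]], forall t, g t = gamma_h t}.
Proof.
move=> g_nu t; rewrite inE => /nu_onto[s sab <-].
by rewrite -g_nu -?gamma_h_nu // inE.
Qed.

Lemma image_gamma_h s : s \in `[a, b] -> gamma_h @` `[0, nuf s] = img a s.
Proof. by move=> sab; rewrite /gamma_h -image_comp nu_inv_image. Qed.

Lemma nu_gamma_h : {in [set` `[0, nuf b]], forall t, nu mu 0 gamma_h t = t}.
Proof.
by move=> t; rewrite inE => /nu_onto[s sab <-]; rewrite /nu image_gamma_h.
Qed.
End mu_arc_length.

Theorem theorem2p2 (R : realType) (X : pseudoPMetricType R)
  (HX : hausdorff_space X)
  (mu : {measure set (borelType X) -> \bar R})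
  (Hna : non_atomic mu)
  (a b : R) (gamma : R -> X) :
  in_Gamma mu a b gamma ->
  exists gamma_h : R -> X,
    [/\ (* gamma = gamma_h o nu_gamma on [a,b] *)
        {in [set` `[a, b]], forall t, gamma t = gamma_h (nu mu a gamma t)},
        (* uniqueness of gamma_h as a map [0, h(gamma)] -> X *)
        (forall g : R -> X,
           {in [set` `[a, b]], forall t, gamma t = g (nu mu a gamma t)} ->
           {in [set` `[0, hgt mu a b gamma]], forall t, g t = gamma_h t}),
        (* Im(gamma) = Im(gamma_h) *)
        gamma @` [set` `[a, b]] = gamma_h @` [set` `[0, hgt mu a b gamma]] &
        (* nu_{gamma_h}(t) = t on [0, h(gamma)] *)
        {in [set` `[0, hgt mu a b gamma]], forall t, nu mu 0 gamma_h t = t}].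
Proof.
move=> gammaG; have [ab _ _ _] := gammaG.
exists (gamma \o pinv `[a, b] (nu mu a gamma)); split.
- exact: gamma_h_nu.
- exact: gamma_h_unique.
- by rewrite (image_gamma_h HX Hna gammaG) // in_itv /= lexx ltW.
- exact: nu_gamma_h.
Qed.
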